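(* Let $(X,Y,\phi)$ be an $L$-context and $X'\subseteq X$, $Y'\subseteq Y$. Then $(X',Y',\phi_{X',Y'})$ is a reduct of $(X,Y,\phi)$ in RST if and only if both $X\setminus X'$ and $Y\setminus Y'$ are $\phi$-reducible in RST.
   Context: $L=(L,* )$ is a complete residuated lattice: a complete lattice with bottom $0$ and top $1$, equipped with a commutative associative operation $*$ with unit $1$ satisfying $a*\bigvee_i b_i=\bigvee_i a*b_i$; $\to$ is its residuum ($a*b\le c\iff a\le b\to c$). An $L$-context is a triple $(X,Y,\phi)$ with $X,Y$ sets and $\phi\colon X\times Y\to L$. $L^X$ is the set of maps $X\to L$ with $L$-order $L^X(\mu,\mu')=\bigwedge_{x}(\mu(x)\to\mu'(x))$. $(\phi^\exists\mu)(y)=\bigvee_{x\in X}\mu(x)*\phi(x,y)$, $(\phi^\forall\lambda)(x)=\bigwedge_{y\in Y}(\phi(x,y)\to\lambda(y))$. $\mathcal{K}\phi=\{\mu\in L^X\mid\phi^\forall\phi^\exists\mu=\mu\}$ with the inherited $L$-order. $\phi_{X',Y'}$ is the restriction of $\phi$ to $X'\times Y'$; $\mu_{X'}$ the restriction of $\mu$ to $X'$; $\underline{\mu'}\in L^X$ the extension of $\mu'\in L^{X'}$ by $0$. An isomorphism of complete $L$-lattices is an $L$-isometric bijection. Reduct in RST: $(X',Y',\phi_{X',Y'})$ is a reduct of $(X,Y,\phi)$ in RST if the map $S_1\colon\mathcal{K}\phi\to\mathcal{K}\phi_{X',Y'}$, $S_1\mu=(\phi_{X',Y'})^\forall(\phi_{X',Y'})^\exists\mu_{X'}$,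 is an isomorphism of complete $L$-lattices; equivalently (by a theorem of the paper) any one of $S_2\mu=((\phi_{X,Y'})^\forall(\phi_{X,Y'})^\exists\mu)_{X'}$, $F_1\mu'=\phi^\forall\phi^\exists\underline{\mu'}$, $F_2\mu'=(\phi_{X,Y'})^\forall(\phi_{X,Y'})^\exists\underline{\mu'}$ (between $\mathcal{K}\phi$ and $\mathcal{K}\phi_{X',Y'}$) is an isomorphism. $\phi$-reducibility in RST: $X\setminus X'$ is $\phi$-reducible in RST if for every $\mu\in L^X$ there is $\mu'\in L^{X'}$ with $\phi^\exists\mu=(\phi_{X',Y})^\exists\mu'$; $Y\setminus Y'$ is $\phi$-reducible in RST if for every $\lambda\in L^Y$ there is $\lambda'\in L^{Y'}$ with $\phi^\forall\lambda=(\phi_{X,Y'})^\forall\lambda'$. *)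

Set Implicit Arguments.

Record crl := CRL {
  carrier :> Type;
  le : carrier -> carrier -> Prop;
  le_refl : forall a, le a a;
  le_trans : forall a b c, le a b -> le b c -> le a c;
  le_antisym : forall a b, le a b -> le b a -> a = b;
  sup : (carrier -> Prop) -> carrier;
  sup_ub : forall (S : carrier -> Prop) a, S a -> le a (sup S);
  sup_least : forall (S : carrier -> Prop) b,
      (forall a, S a -> le a b) -> le (sup S) b;
  inf : (carrier -> Prop) -> carrier;
  inf_lb : forall (S : carrier -> Prop) a, S a -> le (inf S) a;
  inf_greatest : forall (S : carrier -> Prop) b,
      (forall a, S a -> le b a) -> le b (inf S);
  mul : carrier -> carrier -> carrier;
  imp : carrier -> carrier -> carrier;
  mul_comm : forall a b, mul a b = mul b a;
  mul_assoc : forall a b c, mul a (mul b c) = mul (mul a b) c;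
  (* unit of * is the top element 1 = inf of the empty set *)
  mul_one : forall a, mul a (inf (fun _ => False)) = a;
  mul_sup : forall a (S : carrier -> Prop),
      mul a (sup S) = sup (fun c => exists b, S b /\ c = mul a b);
  residuation : forall a b c, le (mul a b) c <-> le a (imp b c)
}.

Arguments le {c} _ _ : rename.
Arguments sup {c} _ : rename.
Arguments inf {c} _ : rename.
Arguments mul {c} _ _ : rename.
Arguments imp {c} _ _ : rename.

Section Defs.
Context {L : crl}.

Definition supI {I : Type} (f : I -> L) : L := sup (fun a => exists i, a = f i).
Definition infI {I : Type} (f : I -> L) : L := inf (fun a => exists i, a = f i).

Definition phiE {X Y : Type} (phi : X -> Y -> L) (mu : X -> L) : Y -> L :=
  fun y => supI (fun x => mul (mu x) (phi x y)).
Definition phiA {X Y : Type} (phi : X -> Y -> L) (lam : Y -> L) : X -> L :=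
  fun x => infI (fun y => imp (phi x y) (lam y)).

Definition Lord {X : Type} (mu mu' : X -> L) : L :=
  infI (fun x => imp (mu x) (mu' x)).

Definition inK {X Y : Type} (phi : X -> Y -> L) (mu : X -> L) : Prop :=
  phiA phi (phiE phi mu) = mu.

(** Restrictions: X' and Y' are subsets given as predicates; the subsets
    themselves are the sigma types {x | X' x}. *)
Definition restr {X Y : Type} (phi : X -> Y -> L) (X' : X -> Prop) (Y' : Y -> Prop)
  : {x | X' x} -> {y | Y' y} -> L :=
  fun x y => phi (proj1_sig x) (proj1_sig y).
Definition restrX {X Y : Type} (phi : X -> Y -> L) (X' : X -> Prop)
  : {x | X' x} -> Y -> L := fun x y => phi (proj1_sig x) y.
Definition restrY {X Y : Type} (phi : X -> Y -> L) (Y' : Y -> Prop)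
  : X -> {y | Y' y} -> L := fun x y => phi x (proj1_sig y).
Definition restrf {X : Type} (mu : X -> L) (X' : X -> Prop) : {x | X' x} -> L :=
  fun x => mu (proj1_sig x).

(** Isomorphism of complete L-lattices: an L-isometric bijection
    f : P -> Q (P, Q subsets of L^A, L^B with the inherited L-order). *)
Definition L_iso {A B : Type} (P : (A -> L) -> Prop) (Q : (B -> L) -> Prop)
  (f : (A -> L) -> (B -> L)) : Prop :=
  (forall mu, P mu -> Q (f mu)) /\
  (forall mu1 mu2, P mu1 -> P mu2 -> f mu1 = f mu2 -> mu1 = mu2) /\
  (forall nu, Q nu -> exists mu, P mu /\ f mu = nu) /\
  (forall mu1 mu2, P mu1 -> P mu2 -> Lord (f mu1) (f mu2) = Lord mu1 mu2).

Definition S1 {X Y : Type} (phi : X -> Y -> L) (X' : X -> Prop) (Y' : Y -> Prop)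
  (mu : X -> L) : {x | X' x} -> L :=
  phiA (restr phi X' Y') (phiE (restr phi X' Y') (restrf mu X')).

Definition is_reduct {X Y : Type} (phi : X -> Y -> L) (X' : X -> Prop) (Y' : Y -> Prop)
  : Prop :=
  L_iso (inK phi) (inK (restr phi X' Y')) (S1 phi X' Y').

Definition reducibleX {X Y : Type} (phi : X -> Y -> L) (X' : X -> Prop) : Prop :=
  forall mu : X -> L, exists mu' : {x | X' x} -> L,
    phiE phi mu = phiE (restrX phi X') mu'.
Definition reducibleY {X Y : Type} (phi : X -> Y -> L) (Y' : Y -> Prop) : Prop :=
  forall lam : Y -> L, exists lam' : {y | Y' y} -> L,
    phiA phi lam = phiA (restrY phi Y') lam'.

End Defs.

(* If Y \ Y' is reducible, every closed mu is phi^forall of a function on Y',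
   so its restriction to X' is already closed in the reduced context and S_1
   is plain restriction; if moreover X \ X' is reducible, phi^exists of a
   closed mu is computed from its restriction to X', and this is exactly what
   makes restriction an L-isometry.  Conversely, injectivity of S_1 recovers a
   closed mu as phi^forall of a function on Y', and the fact that S_1 reflects
   the order forces phi^exists m to come from m restricted to X'. *)

From Stdlib Require Import FunctionalExtensionality.

Section Residuated.
Context {L : crl}.

Definition one : L := inf (fun _ => False).

Definition le_fun {A : Type} (f g : A -> L) : Prop := forall a, le (f a) (g a).

Lemma mul_one_l (a : L) : mul one a = a.
Proof. rewrite mul_comm. apply mul_one. Qed.

Lemma mul_le_mono_l (c a b : L) : le a b -> le (mul c a) (mul c b).
Proof.
  intros Hab. rewrite (mul_comm _ c a). apply residuation.
  apply le_trans with b; [exact Hab |].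
  apply residuation. rewrite mul_comm. apply le_refl.
Qed.

Lemma mul_le_mono_r (c a b : L) : le a b -> le (mul a c) (mul b c).
Proof. intros Hab. rewrite (mul_comm _ a), (mul_comm _ b). now apply mul_le_mono_l. Qed.

Lemma supI_ub {I : Type} (f : I -> L) i : le (f i) (supI f).
Proof. apply sup_ub. now exists i. Qed.

Lemma supI_least {I : Type} (f : I -> L) b :
  (forall i, le (f i) b) -> le (supI f) b.
Proof. intros Hb. apply sup_least. intros a [i ->]. apply Hb. Qed.

Lemma infI_lb {I : Type} (f : I -> L) i : le (infI f) (f i).
Proof. apply inf_lb. now exists i. Qed.

Lemma infI_greatest {I : Type} (f : I -> L) b :
  (forall i, le b (f i)) -> le b (infI f).
Proof. intros Hb. apply inf_greatest. intros a [i ->]. apply Hb. Qed.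

Lemma mul_supI_le {I : Type} (c : L) (f : I -> L) b :
  (forall i, le (mul c (f i)) b) -> le (mul c (supI f)) b.
Proof.
  intros Hb. unfold supI. rewrite mul_sup. apply sup_least.
  intros a [x [[i ->] ->]]. apply Hb.
Qed.

Lemma le_fun_antisym {A : Type} (f g : A -> L) : le_fun f g -> le_fun g f -> f = g.
Proof.
  intros Hfg Hgf. apply functional_extensionality. intros a. now apply le_antisym.
Qed.

Lemma one_le_Lord {A : Type} (m1 m2 : A -> L) : le one (Lord m1 m2) <-> le_fun m1 m2.
Proof.
  split.
  - intros H a. rewrite <- (mul_one_l (m1 a)). apply residuation.
    apply le_trans with (1 := H). apply (infI_lb (fun a => imp (m1 a) (m2 a))).
  - intros H. apply infI_greatest. intros a. apply residuation.
    rewrite mul_one_l. apply H.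
Qed.

Lemma eq_of_one_le_Lord {A : Type} (m1 m2 : A -> L) :
  le one (Lord m1 m2) -> le one (Lord m2 m1) -> m1 = m2.
Proof. intros H12 H21. now apply le_fun_antisym; apply one_le_Lord. Qed.

End Residuated.

Section Galois.
Context {L : crl} {A B : Type} (phi : A -> B -> L).

Lemma phiE_mono (m1 m2 : A -> L) : le_fun m1 m2 -> le_fun (phiE phi m1) (phiE phi m2).
Proof.
  intros Hm b. apply supI_least. intros a.
  apply le_trans with (mul (m2 a) (phi a b)).
  - apply mul_le_mono_r, Hm.
  - apply (supI_ub (fun a => mul (m2 a) (phi a b))).
Qed.

Lemma phiA_mono (l1 l2 : B -> L) : le_fun l1 l2 -> le_fun (phiA phi l1) (phiA phi l2).
Proof.
  intros Hl a. apply infI_greatest. intros b. apply residuation.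
  apply le_trans with (l1 b); [| apply Hl].
  apply residuation. apply (infI_lb (fun b => imp (phi a b) (l1 b))).
Qed.

Lemma le_phiA_of (c : L) (a : A) (l : B -> L) :
  (forall b, le (mul c (phi a b)) (l b)) -> le c (phiA phi l a).
Proof. intros Hc. apply infI_greatest. intros b. apply residuation, Hc. Qed.

Lemma le_phiA_phiE (m : A -> L) : le_fun m (phiA phi (phiE phi m)).
Proof.
  intros a. apply le_phiA_of. intros b.
  apply (supI_ub (fun a => mul (m a) (phi a b))).
Qed.

Lemma phiE_phiA_le (l : B -> L) : le_fun (phiE phi (phiA phi l)) l.
Proof.
  intros b. apply supI_least. intros a. apply residuation.
  apply (infI_lb (fun b => imp (phi a b) (l b))).
Qed.

Lemma le_inK (m : A -> L) (c : L) (a : A) :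
  inK phi m -> (forall b, le (mul c (phi a b)) (phiE phi m b)) -> le c (m a).
Proof. intros Hm Hc. rewrite <- Hm. now apply le_phiA_of. Qed.

End Galois.

Section Closed.
Context {L : crl} {A B : Type} (phi : A -> B -> L).

Lemma inK_phiA_comp {B' : Type} (g : B' -> B) (l : B' -> L) :
  inK phi (phiA (fun a b' => phi a (g b')) l).
Proof.
  set (mu := phiA (fun a b' => phi a (g b')) l).
  apply le_fun_antisym; [| apply le_phiA_phiE].
  intros a. apply (le_phiA_of (fun a b' => phi a (g b'))). intros b'.
  apply le_trans with (phiE phi mu (g b')).
  - apply residuation. apply (infI_lb (fun b => imp (phi a b) (phiE phi mu b))).
  - apply (phiE_phiA_le (fun a b' => phi a (g b'))).
Qed.

Lemma inK_phiA (l : B -> L) : inK phi (phiA phi l).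
Proof. exact (inK_phiA_comp (fun b => b) l). Qed.

Lemma phiE_closure (mu : A -> L) : phiE phi (phiA phi (phiE phi mu)) = phiE phi mu.
Proof.
  apply le_fun_antisym.
  - apply phiE_phiA_le.
  - apply phiE_mono, le_phiA_phiE.
Qed.

End Closed.

Section Reduct.
Context {L : crl} {X Y : Type} (phi : X -> Y -> L) (X' : X -> Prop) (Y' : Y -> Prop).

Lemma inK_phiA_restrY (l : {y | Y' y} -> L) : inK phi (phiA (restrY phi Y') l).
Proof. exact (inK_phiA_comp phi (@proj1_sig Y Y') l). Qed.

Lemma S1_phiA_restrY (l : {y | Y' y} -> L) :
  S1 phi X' Y' (phiA (restrY phi Y') l) = phiA (restr phi X' Y') l.
Proof. exact (inK_phiA (restr phi X' Y') l). Qed.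

Lemma phiE_restrX_le (mu : X -> L) :
  le_fun (phiE (restrX phi X') (restrf mu X')) (phiE phi mu).
Proof.
  intros y. apply supI_least. intros x'.
  apply (supI_ub (fun x => mul (mu x) (phi x y))).
Qed.

Lemma reducibleX_of_closed :
  (forall m, inK phi m -> phiE phi m = phiE (restrX phi X') (restrf m X')) ->
  reducibleX phi X'.
Proof.
  intros Hclosed mu. exists (restrf (phiA phi (phiE phi mu)) X').
  rewrite <- Hclosed by apply inK_phiA. symmetry. apply phiE_closure.
Qed.

Lemma reducibleX_of_reduct : is_reduct phi X' Y' -> reducibleX phi X'.
Proof.
  intros [_ [_ [_ Hiso]]]. apply reducibleX_of_closed. intros m Hm.
  set (rho := phiE (restrX phi X') (restrf m X')).
  assert (Hm_rho : le_fun m (phiA phi rho)).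
  { apply one_le_Lord. rewrite <- Hiso by (auto using inK_phiA).
    apply one_le_Lord. unfold S1. apply phiA_mono, phiE_mono.
    exact (le_phiA_phiE (restrX phi X') (restrf m X')). }
  apply le_fun_antisym.
  - intros y. apply le_trans with (phiE phi (phiA phi rho) y).
    + exact (phiE_mono phi _ _ Hm_rho y).
    + apply phiE_phiA_le.
  - apply phiE_restrX_le.
Qed.

Lemma reducibleY_of_reduct : is_reduct phi X' Y' -> reducibleY phi Y'.
Proof.
  intros [Hmap [Hinj _]] lam.
  set (m := phiA phi lam).
  set (nu := S1 phi X' Y' m).
  assert (Hnu : inK (restr phi X' Y') nu) by (apply Hmap, inK_phiA).
  exists (phiE (restr phi X' Y') nu).
  apply Hinj; [apply inK_phiA | apply inK_phiA_restrY |].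
  rewrite S1_phiA_restrY. symmetry. exact Hnu.
Qed.

Lemma S1_closed_eq_restrf (mu : X -> L) :
  reducibleY phi Y' -> inK phi mu -> S1 phi X' Y' mu = restrf mu X'.
Proof.
  intros RY Hmu. destruct (RY (phiE phi mu)) as [l Hl].
  assert (Emu : mu = phiA (restrY phi Y') l) by now rewrite <- Hmu, Hl.
  rewrite Emu. apply S1_phiA_restrY.
Qed.

Lemma phiE_closed_eq_restrX (mu : X -> L) :
  reducibleX phi X' -> inK phi mu ->
  phiE phi mu = phiE (restrX phi X') (restrf mu X').
Proof.
  intros RX Hmu. destruct (RX mu) as [nu Hnu].
  apply le_fun_antisym; [| apply phiE_restrX_le].
  rewrite Hnu. apply phiE_mono. intros x'.
  apply (le_inK phi mu (nu x') (proj1_sig x') Hmu). intros y.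
  rewrite Hnu. apply (supI_ub (fun x' => mul (nu x') (restrX phi X' x' y))).
Qed.

Lemma Lord_restrf_closed (m1 m2 : X -> L) :
  reducibleX phi X' -> inK phi m1 -> inK phi m2 ->
  Lord (restrf m1 X') (restrf m2 X') = Lord m1 m2.
Proof.
  intros RX Hm1 Hm2. set (e := Lord (restrf m1 X') (restrf m2 X')).
  apply le_antisym.
  - apply infI_greatest. intros x. apply residuation.
    apply (le_inK phi m2 _ x Hm2). intros y. rewrite <- mul_assoc.
    apply le_trans with (mul e (phiE phi m1 y)).
    + apply mul_le_mono_l. apply (supI_ub (fun x => mul (m1 x) (phi x y))).
    + rewrite (phiE_closed_eq_restrX m1 RX Hm1).
      apply mul_supI_le. intros x'. rewrite mul_assoc.
      apply le_trans with (mul (m2 (proj1_sig x')) (phi (proj1_sig x') y)).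
      * apply mul_le_mono_r, residuation.
        apply (infI_lb (fun x => imp (restrf m1 X' x) (restrf m2 X' x))).
      * apply (supI_ub (fun x => mul (m2 x) (phi x y))).
  - apply infI_greatest. intros x'.
    apply (infI_lb (fun x => imp (m1 x) (m2 x)) (proj1_sig x')).
Qed.

Lemma reduct_of_reducible :
  reducibleX phi X' -> reducibleY phi Y' -> is_reduct phi X' Y'.
Proof.
  intros RX RY.
  assert (Hiso : forall m1 m2, inK phi m1 -> inK phi m2 ->
            Lord (S1 phi X' Y' m1) (S1 phi X' Y' m2) = Lord m1 m2).
  { intros m1 m2 Hm1 Hm2.
    rewrite !S1_closed_eq_restrf by assumption. now apply Lord_restrf_closed. }
  split; [| split; [| split]].
  - intros mu _. apply inK_phiA.
  - intros m1 m2 Hm1 Hm2 E.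
    apply eq_of_one_le_Lord; rewrite <- Hiso, E by assumption;
      apply one_le_Lord; intro; apply le_refl.
  - intros nu Hnu. exists (phiA (restrY phi Y') (phiE (restr phi X' Y') nu)).
    split; [apply inK_phiA_restrY |].
    rewrite S1_phiA_restrY. exact Hnu.
  - exact Hiso.
Qed.

End Reduct.

Theorem mainTheorem6 (L : crl) (X Y : Type) (phi : X -> Y -> L)
  (X' : X -> Prop) (Y' : Y -> Prop) :
  is_reduct phi X' Y' <-> (reducibleX phi X' /\ reducibleY phi Y').
Proof.
  split.
  - intros Hred. split.
    + exact (reducibleX_of_reduct phi X' Y' Hred).
    + exact (reducibleY_of_reduct phi X' Y' Hred).
  - intros [RX RY]. exact (reduct_of_reducible phi X' Y' RX RY).
Qed.
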